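(* If $\Lambda$ is a finite index subgroup of a group $\Gamma$, then $\mathrm{Lit}(\Lambda)=\mathrm{Lit}(\Gamma)$.
   Context: $T_1(\Gamma)$ is the space of all $f\colon\Gamma\to\mathbf{C}$ for which there exist $f_1,f_2\colon\Gamma\times\Gamma\to\mathbf{C}$ with $f(x^{-1}y)=f_1(x,y)+f_2(x,y)$ for all $x,y$, $\sup_x\sum_y|f_1(x,y)|<\infty$, $\sup_y\sum_x|f_2(x,y)|<\infty$; $\mathrm{Lit}(\Gamma)=\inf\{p>0:T_1(\Gamma)\subseteq\ell^p(\Gamma)\}\in[0,\infty]$. *)

From Stdlib Require Import Reals List ProofIrrelevance.
From Coquelicot Require Import Coquelicot.
Import ListNotations.
Open Scope R_scope.

Record group := Group {
  carrier :> Type;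
  gmul : carrier -> carrier -> carrier;
  ginv : carrier -> carrier;
  gone : carrier;
  gmulA : forall x y z, gmul x (gmul y z) = gmul (gmul x y) z;
  gmul1 : forall x, gmul gone x = x;
  gmulV : forall x, gmul (ginv x) x = gone
}.

Record subgroup (G : group) := Subgroup {
  sg_mem :> G -> Prop;
  sg_one : sg_mem (gone G);
  sg_mul : forall x y, sg_mem x -> sg_mem y -> sg_mem (gmul G x y);
  sg_inv : forall x, sg_mem x -> sg_mem (ginv G x)
}.

Section SubGroupAsGroup.
Variables (G : group) (H : subgroup G).
Definition sg_car := {x : G | H x}.
Definition sg_gmul (a b : sg_car) : sg_car :=
  exist _ (gmul G (proj1_sig a) (proj1_sig b)) (sg_mul _ H _ _ (proj2_sig a) (proj2_sig b)).
Definition sg_ginv (a : sg_car) : sg_car :=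
  exist _ (ginv G (proj1_sig a)) (sg_inv _ H _ (proj2_sig a)).
Definition sg_gone : sg_car := exist _ (gone G) (sg_one _ H).
Lemma sg_eq (a b : sg_car) : proj1_sig a = proj1_sig b -> a = b.
Proof. destruct a, b; simpl; intros ->; f_equal; apply proof_irrelevance. Qed.
Lemma sg_gmulA x y z : sg_gmul x (sg_gmul y z) = sg_gmul (sg_gmul x y) z.
Proof. apply sg_eq; simpl; apply gmulA. Qed.
Lemma sg_gmul1 x : sg_gmul sg_gone x = x.
Proof. apply sg_eq; simpl; apply gmul1. Qed.
Lemma sg_gmulV x : sg_gmul (sg_ginv x) x = sg_gone.
Proof. apply sg_eq; simpl; apply gmulV. Qed.
Definition subgroup_group : group :=
  Group sg_car sg_gmul sg_ginv sg_gone sg_gmulA sg_gmul1 sg_gmulV.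
End SubGroupAsGroup.

Definition finite_index (G : group) (H : subgroup G) : Prop :=
  exists reps : list G, forall x : G,
    exists g, In g reps /\ H (gmul G (ginv G g) x).

Definition lsum {T : Type} (l : list T) (a : T -> R) : R :=
  fold_right Rplus 0 (map a l).

(* sum_{t in T} a t < oo for a >= 0 : all finite partial sums (over
   duplicate-free lists) are bounded. *)
Definition summable {T : Type} (a : T -> R) : Prop :=
  exists M : R, forall l : list T, NoDup l -> lsum l a <= M.

(* |z|^p with the convention 0^p = 0 (for p > 0). *)
Definition cpow (z : C) (p : R) : R :=
  if Req_EM_T (Cmod z) 0 then 0 else Rpower (Cmod z) p.

Definition lp (G : group) (p : R) (f : G -> C) : Prop :=
  summable (fun x => cpow (f x) p).

Definition T1 (G : group) (f : G -> C) : Prop :=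
  exists f1 f2 : G -> G -> C,
    (forall x y, f (gmul G (ginv G x) y) = Cplus (f1 x y) (f2 x y)) /\
    (exists M : R, forall x : G, forall l : list G, NoDup l ->
        lsum l (fun y => Cmod (f1 x y)) <= M) /\
    (exists M : R, forall y : G, forall l : list G, NoDup l ->
        lsum l (fun x => Cmod (f2 x y)) <= M).

(* Lit(G) = inf { p > 0 : T_1(G) ⊆ l^p(G) } in [0, +oo] (inf of empty = +oo). *)
Definition Lit (G : group) : Rbar :=
  Glb_Rbar (fun p => 0 < p /\ forall f : G -> C, T1 G f -> lp G p f).

(* Both groups have the same set of exponents p with T_1 ⊆ l^p, hence the same
   infimum.  Extending f ∈ T_1(Λ) by zero gives an element of T_1(Γ): if r(x)
   is a chosen representative of the coset xΛ, then y ↦ r(x)⁻¹y identifies xΛ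
   with Λ and preserves x⁻¹y, while f(x⁻¹y) vanishes off the cosets.
   Conversely, for f ∈ T_1(Γ) every translate a ↦ f(ga) lies in T_1(Λ), hence
   in l^p(Λ), and finitely many cosets gΛ cover Γ, so f ∈ l^p(Γ). *)
From Stdlib Require Import Reals.
From Coquelicot Require Import Coquelicot.
From Stdlib Require Import List FinFun Lra.
From Stdlib Require Import ClassicalEpsilon FunctionalExtensionality.
From Stdlib Require Import PropExtensionality ProofIrrelevance.
Import ListNotations.
Open Scope R_scope.

Section GroupFacts.
Variable G : group.

Lemma gmulxV x : gmul G x (ginv G x) = gone G.
Proof.
  rewrite <- (gmul1 G (gmul G x (ginv G x))) at 1.
  rewrite <- (gmulV G (gmul G x (ginv G x))) at 1.
  rewrite <- !gmulA, (gmulA G (ginv G x) x), gmulV, gmul1.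
  apply gmulV.
Qed.

Lemma gmulx1 x : gmul G x (gone G) = x.
Proof. rewrite <- (gmulV G x), gmulA, gmulxV, gmul1. reflexivity. Qed.

Lemma ginv_uniq u v : gmul G u v = gone G -> ginv G v = u.
Proof.
  intros E. rewrite <- (gmul1 G (ginv G v)), <- E, <- gmulA, gmulxV, gmulx1.
  reflexivity.
Qed.

Lemma ginvK x : ginv G (ginv G x) = x.
Proof. apply ginv_uniq, gmulxV. Qed.

Lemma ginvM x y : ginv G (gmul G x y) = gmul G (ginv G y) (ginv G x).
Proof.
  apply ginv_uniq.
  rewrite <- gmulA, (gmulA G (ginv G x) x), gmulV, gmul1, gmulV. reflexivity.
Qed.

Lemma gmulKV g x : gmul G g (gmul G (ginv G g) x) = x.
Proof. rewrite gmulA, gmulxV, gmul1. reflexivity. Qed.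

Lemma gmul_injl g : Injective (gmul G g).
Proof.
  intros x y E. rewrite <- (gmulKV (ginv G g) x), <- (gmulKV (ginv G g) y), ginvK, E.
  reflexivity.
Qed.

Lemma gmul_injr g : Injective (fun x => gmul G x g).
Proof.
  intros x y E. apply (f_equal (fun z => gmul G z (ginv G g))) in E.
  rewrite <- !gmulA, gmulxV, !gmulx1 in E. exact E.
Qed.

End GroupFacts.

Lemma sig_inj {A : Type} {P : A -> Prop} (u v : {x | P x}) :
  proj1_sig u = proj1_sig v -> u = v.
Proof. apply eq_sig_hprop. intros; apply proof_irrelevance. Qed.

Definition extend_by {A V : Type} (P : A -> Prop) (v0 : V) (a : {x | P x} -> V)
    (x : A) : V :=
  match excluded_middle_informative (P x) with
  | left h => a (exist P x h)
  | right _ => v0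
  end.

Lemma extend_by_comp {A V W : Type} (g : V -> W) (P : A -> Prop) v0 a :
  (fun x => g (extend_by P v0 a x)) = extend_by P (g v0) (fun s => g (a s)).
Proof.
  apply functional_extensionality. intros x. unfold extend_by.
  destruct excluded_middle_informative; reflexivity.
Qed.

Lemma extend_by_sig {A V : Type} (P : A -> Prop) (v0 : V) a (s : {x | P x}) :
  extend_by P v0 a (proj1_sig s) = a s.
Proof.
  destruct s as [x Hx]. unfold extend_by. simpl.
  destruct excluded_middle_informative as [Hx'|]; [|contradiction].
  f_equal. apply sig_inj. reflexivity.
Qed.

Section FiniteSums.
Context {A B : Type}.

Lemma lsum_map (f : A -> B) (l : list A) (b : B -> R) :
  lsum (map f l) b = lsum l (fun x => b (f x)).
Proof. unfold lsum. rewrite map_map. reflexivity. Qed.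

Lemma lsum_ext (l : list A) (a b : A -> R) :
  (forall x, a x = b x) -> lsum l a = lsum l b.
Proof. intros E. unfold lsum. f_equal. apply map_ext, E. Qed.

Lemma lsum_plus (l : list A) (a b : A -> R) :
  lsum l (fun x => a x + b x) = lsum l a + lsum l b.
Proof. induction l as [|x l IH]; unfold lsum in *; simpl; [ring|]. rewrite IH. ring. Qed.

Lemma lsum_le (l : list A) (a b : A -> R) :
  (forall x, a x <= b x) -> lsum l a <= lsum l b.
Proof.
  intros Hab. induction l as [|x l IH]; unfold lsum in *; simpl; [lra|].
  specialize (Hab x). lra.
Qed.

Lemma lsum_ge0 (l : list A) (a : A -> R) : (forall x, 0 <= a x) -> 0 <= lsum l a.
Proof.
  intros Ha. induction l as [|x l IH]; unfold lsum in *; simpl; [lra|].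
  specialize (Ha x). lra.
Qed.

Lemma lsum_In_le (l : list A) (a : A -> R) x :
  In x l -> (forall x, 0 <= a x) -> a x <= lsum l a.
Proof.
  intros Hx Ha. induction l as [|y l IH]; simpl in *; [tauto|]. unfold lsum; simpl.
  destruct Hx as [<-|Hx].
  - pose proof (lsum_ge0 l a Ha). unfold lsum in *. lra.
  - specialize (IH Hx). specialize (Ha y). unfold lsum in *. lra.
Qed.

Fixpoint restrict (P : A -> Prop) (l : list A) : list {x | P x} :=
  match l with
  | [] => []
  | x :: l' => match excluded_middle_informative (P x) with
               | left h => exist P x h :: restrict P l'
               | right _ => restrict P l'
               end
  end.

Lemma in_restrict P l s : In s (restrict P l) -> In (proj1_sig s) l.
Proof.
  induction l as [|x l IH]; simpl; [tauto|].
  destruct excluded_middle_informative; simpl; [intros [<-|Hs]|]; auto.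
Qed.

Lemma NoDup_restrict P l : NoDup l -> NoDup (restrict P l).
Proof.
  induction 1 as [|x l Hx _ IH]; simpl; [constructor|].
  destruct excluded_middle_informative; auto.
  constructor; auto. intros Hin. exact (Hx (in_restrict _ _ _ Hin)).
Qed.

Lemma lsum_extend_by P (a : {x | P x} -> R) l :
  lsum l (extend_by P 0 a) = lsum (restrict P l) a.
Proof.
  induction l as [|x l IH]; unfold lsum in *; simpl; auto. unfold extend_by at 1.
  destruct excluded_middle_informative; simpl; rewrite IH; ring.
Qed.

End FiniteSums.

Definition sum_bounded {T : Type} (a : T -> R) (M : R) : Prop :=
  forall l : list T, NoDup l -> lsum l a <= M.

Section Summability.
Context {A B : Type}.

Lemma sum_bounded_comp (phi : A -> B) (b : B -> R) M :
  Injective phi -> sum_bounded b M -> sum_bounded (fun x => b (phi x)) M.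
Proof.
  intros Hphi Hb l Hl. rewrite <- lsum_map. apply Hb, Injective_map_NoDup; auto.
Qed.

Lemma sum_bounded_extend_by (P : A -> Prop) (a : {x | P x} -> R) M :
  sum_bounded a M -> sum_bounded (extend_by P 0 a) M.
Proof. intros Ha l Hl. rewrite lsum_extend_by. apply Ha, NoDup_restrict, Hl. Qed.

Lemma summable_le (a b : A -> R) :
  (forall x, a x <= b x) -> summable b -> summable a.
Proof.
  intros Hab [M HM]. exists M. intros l Hl.
  apply Rle_trans with (lsum l b); auto using lsum_le.
Qed.

Lemma summable_lsum (I : list B) (d : B -> A -> R) :
  (forall i, In i I -> summable (d i)) ->
  summable (fun x => lsum I (fun i => d i x)).
Proof.
  induction I as [|i I IH]; intros Hd.
  - exists 0. intros l _. induction l as [|x l IHl]; unfold lsum in *; simpl in *; lra.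
  - destruct (Hd i (or_introl eq_refl)) as [Mi HMi].
    destruct IH as [M HM]; [intros j Hj; apply Hd; right; exact Hj|].
    exists (Mi + M). intros l Hl. unfold lsum at 1. simpl map.
    change (lsum l (fun x => d i x + lsum I (fun j => d j x)) <= Mi + M).
    rewrite lsum_plus. specialize (HMi l Hl). specialize (HM l Hl). lra.
Qed.

End Summability.

Section Cosets.
Variables (G : group) (H : subgroup G).

Definition same_coset (x y : G) : Prop := H (gmul G (ginv G x) y).

Lemma same_coset_refl x : same_coset x x.
Proof. unfold same_coset. rewrite gmulV. apply sg_one. Qed.

Lemma same_coset_sym x y : same_coset x y -> same_coset y x.
Proof.
  unfold same_coset. intros Hxy. apply sg_inv in Hxy.
  rewrite ginvM, ginvK in Hxy. exact Hxy.
Qed.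

Lemma same_coset_trans x y z : same_coset x y -> same_coset y z -> same_coset x z.
Proof.
  unfold same_coset. intros Hxy Hyz. pose proof (sg_mul _ H _ _ Hxy Hyz) as Hxz.
  rewrite <- gmulA, gmulKV in Hxz. exact Hxz.
Qed.

Definition coset_rep (x : G) : G :=
  epsilon (inhabits (gone G)) (fun g => same_coset g x).

Lemma coset_rep_spec x : same_coset (coset_rep x) x.
Proof.
  apply (epsilon_spec (inhabits (gone G)) (fun g => same_coset g x)).
  exists x. apply same_coset_refl.
Qed.

Lemma coset_rep_eq x y : same_coset x y -> coset_rep x = coset_rep y.
Proof.
  intros Hxy. unfold coset_rep. f_equal.
  apply functional_extensionality. intros g.
  apply propositional_extensionality.
  split; intros Hg; eapply same_coset_trans; eauto using same_coset_sym.
Qed.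

Definition coset_coord (x : G) : sg_car G H :=
  exist _ (gmul G (ginv G (coset_rep x)) x) (coset_rep_spec x).

Lemma coset_coord_inj_on (P : G -> Prop) :
  (forall x y, P x -> P y -> same_coset x y) ->
  Injective (fun s : {x | P x} => coset_coord (proj1_sig s)).
Proof.
  intros HP [x Hx] [y Hy] E. apply sig_inj; simpl.
  apply (f_equal (@proj1_sig _ _)) in E. simpl in E.
  rewrite (coset_rep_eq x y (HP x y Hx Hy)) in E.
  exact (gmul_injl G _ _ _ E).
Qed.

Lemma coset_coord_div x y :
  same_coset x y ->
  proj1_sig (sg_gmul G H (sg_ginv G H (coset_coord x)) (coset_coord y))
  = gmul G (ginv G x) y.
Proof.
  intros Hxy. simpl. rewrite (coset_rep_eq x y Hxy), ginvM, ginvK, <- gmulA, gmulKV.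
  reflexivity.
Qed.

End Cosets.

Section ZeroExtension.
Variables (G : group) (H : subgroup G).

Lemma T1_extend_by_zero f :
  T1 (subgroup_group G H) f -> T1 G (extend_by (sg_mem G H) (RtoC 0) f).
Proof.
  intros [f1 [f2 [Hf [[M1 HM1] [M2 HM2]]]]].
  exists (fun x => extend_by (same_coset G H x) (RtoC 0)
            (fun s => f1 (coset_coord G H x) (coset_coord G H (proj1_sig s)))).
  exists (fun x y => extend_by (fun x' => same_coset G H x' y) (RtoC 0)
            (fun s => f2 (coset_coord G H (proj1_sig s)) (coset_coord G H y)) x).
  split; [|split].
  - intros x y. unfold extend_by, same_coset.
    destruct (excluded_middle_informative (H (gmul G (ginv G x) y))) as [Hxy|Hxy].
    + rewrite <- Hf. f_equal. apply sig_inj. symmetry. apply coset_coord_div, Hxy.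
    + symmetry. apply Cplus_0_l.
  - exists M1. intros x. rewrite extend_by_comp, Cmod_0.
    apply sum_bounded_extend_by.
    apply (sum_bounded_comp _ (fun t => Cmod (f1 (coset_coord G H x) t))); [|exact (HM1 _)].
    apply coset_coord_inj_on. eauto using same_coset_trans, same_coset_sym.
  - exists M2. intros y. rewrite extend_by_comp, Cmod_0.
    apply sum_bounded_extend_by.
    apply (sum_bounded_comp _ (fun t => Cmod (f2 t (coset_coord G H y)))); [|exact (HM2 _)].
    apply coset_coord_inj_on. eauto using same_coset_trans, same_coset_sym.
Qed.

Lemma lp_of_extend_by_zero p f :
  lp G p (extend_by (sg_mem G H) (RtoC 0) f) -> lp (subgroup_group G H) p f.
Proof.
  intros [M HM]. exists M. intros l Hl.
  rewrite (lsum_ext l _ (fun s => cpow (extend_by (sg_mem G H) (RtoC 0) f (proj1_sig s)) p)).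
  - exact (sum_bounded_comp _ _ M sig_inj HM l Hl).
  - intros s. rewrite extend_by_sig. reflexivity.
Qed.

End ZeroExtension.

Definition T1_in_lp (G : group) (p : R) : Prop := forall f : G -> C, T1 G f -> lp G p f.

Lemma T1_in_lp_subgroup (G : group) (H : subgroup G) p :
  T1_in_lp G p -> T1_in_lp (subgroup_group G H) p.
Proof.
  intros HG f Hf. apply lp_of_extend_by_zero, HG, T1_extend_by_zero, Hf.
Qed.

Lemma T1_translate (G : group) (H : subgroup G) g f :
  T1 G f -> T1 (subgroup_group G H) (fun s => f (gmul G g (proj1_sig s))).
Proof.
  intros [f1 [f2 [Hf [[M1 HM1] [M2 HM2]]]]].
  exists (fun s t : sg_car G H => f1 (gmul G (proj1_sig s) (ginv G g)) (proj1_sig t)).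
  exists (fun s t : sg_car G H => f2 (gmul G (proj1_sig s) (ginv G g)) (proj1_sig t)).
  split; [|split].
  - (* g (s⁻¹ t) = (s g⁻¹)⁻¹ t *)
    intros s t. rewrite <- Hf. simpl. rewrite ginvM, ginvK, gmulA. reflexivity.
  - exists M1. intros s.
    apply (sum_bounded_comp (@proj1_sig _ _)
             (fun y => Cmod (f1 (gmul G (proj1_sig s) (ginv G g)) y))); [|exact (HM1 _)].
    intros u v. apply sig_inj.
  - exists M2. intros t.
    apply (sum_bounded_comp (fun s : sg_car G H => gmul G (proj1_sig s) (ginv G g))
             (fun x => Cmod (f2 x (proj1_sig t)))); [|exact (HM2 _)].
    intros u v E. apply sig_inj, (gmul_injr G (ginv G g)), E.
Qed.

Lemma cpow_ge0 z p : 0 <= cpow z p.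
Proof. unfold cpow. destruct Req_EM_T; [lra|]. apply Rlt_le, exp_pos. Qed.

Lemma T1_in_lp_of_finite_index (G : group) (H : subgroup G) p :
  finite_index G H -> T1_in_lp (subgroup_group G H) p -> T1_in_lp G p.
Proof.
  intros [reps Hreps] HH f Hf.
  (* d g is |f|^p on the coset gΛ and 0 elsewhere *)
  set (d g y := extend_by (sg_mem G H) 0
                  (fun s => cpow (f (gmul G g (proj1_sig s))) p) (gmul G (ginv G g) y)).
  assert (Hd0 : forall g y, 0 <= d g y).
  { intros g y. unfold d, extend_by.
    destruct excluded_middle_informative; [apply cpow_ge0|lra]. }
  assert (Hcover : forall y, cpow (f y) p <= lsum reps (fun g => d g y)).
  { intros y. destruct (Hreps y) as [g [Hg Hy]].
    apply Rle_trans with (d g y).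
    2: exact (lsum_In_le reps (fun g => d g y) g Hg (fun g => Hd0 g y)).
    unfold d. change (gmul G (ginv G g) y) with (proj1_sig (exist (sg_mem G H) _ Hy)).
    rewrite extend_by_sig. simpl. rewrite gmulKV. lra. }
  apply (summable_le _ _ Hcover), summable_lsum. intros g _.
  destruct (HH _ (T1_translate G H g f Hf)) as [M HM]. exists M.
  apply (sum_bounded_comp (gmul G (ginv G g))); [apply gmul_injl|].
  apply sum_bounded_extend_by. exact HM.
Qed.

Theorem proposition3p6 (G : group) (H : subgroup G) :
  finite_index G H -> Lit (subgroup_group G H) = Lit G.
Proof.
  intros Hfin. unfold Lit. f_equal.
  apply functional_extensionality. intros p.
  apply propositional_extensionality.
  split; intros [Hp Hlp]; split; auto.
  - exact (T1_in_lp_of_finite_index G H p Hfin Hlp).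
  - exact (T1_in_lp_subgroup G H p Hlp).
Qed.
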